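(* Let $b>0$, $\sigma>0$, $p>0$, and let $A$, $c$, $\phi$ be as follows: $A\subseteq\mathbb{R}$ is closed with smallest element $\theta_*$; $c:A\to\mathbb{R}$ is nondecreasing and left-continuous with $c(\theta_* )=0$, $c(x)>0$ for $x>\theta_*$, and, if $A$ is unbounded, $\inf\{c(x)/x:x\in A,x\ge y\}\uparrow\infty$ as $y\uparrow\infty$; $\phi(y)=\sup_{x\in A}\{yx-c(x)\}$ for $y\ge0$. Let $\gamma(p)$ be the unique number in $(\phi_*(p),\infty)$, where $\phi_*(p)=-\inf\{\phi(y):y\in[0,p]\}$, with $\tfrac12\sigma^2\int_0^p\frac{du}{\phi(u)+\gamma(p)}=b$; let $G(v,p)=\tfrac12\sigma^2\int_0^v\frac{du}{\phi(u)+\gamma(p)}$ for $v\in[0,p]$; let $v(\cdot,p):[0,b]\to[0,p]$ be the inverse of $G(\cdot,p)$; and let $f(z,p)=\int_0^z v(y,p)\,dy$ for $z\in[0,b]$. Then $f(\cdot,p)$ is nonnegative, nondecreasing, strictly convex and belongs to $\mathcal{C}^2[0,b]$. Moreover, $f=f(\cdot,p)$ and $\gamma=\gamma(p)$ satisfy $$\gamma=\min_{x\in A}\Big\{\tfrac12\sigma^2f''(z)-xf'(z)+c(x)\Big\}\quad\text{for all }z\in(0,b),$$ together with the boundary conditions $f'(0)=0$ and $f'(b)=p$.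
   Context: $\mathcal{C}^2[0,b]$ is the space of functions $f:[0,b]\to\mathbb{R}$ that are twice continuously differentiable on $(0,b)$ with first and second derivatives having finite limits at the endpoints. The supremum defining $\phi(y)$ is finite and attained for each $y\ge0$. *)

From Stdlib Require Import Reals.
From Coquelicot Require Import Coquelicot.
Open Scope R_scope.

Definition phi (A : R -> Prop) (c : R -> R) (y : R) : R :=
  real (Lub_Rbar (fun r => exists x, A x /\ r = y * x - c x)).

Definition phi_star (A : R -> Prop) (c : R -> R) (p : R) : R :=
  - real (Glb_Rbar (fun r => exists y, 0 <= y <= p /\ r = phi A c y)).

Definition Gfun (A : R -> Prop) (c : R -> R) (sigma gamma v : R) : R :=
  (1/2) * sigma ^ 2 * RInt (fun u => / (phi A c u + gamma)) 0 v.

Definition C2_closed (f : R -> R) (b : R) : Prop :=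
  (forall z, 0 < z < b ->
     ex_derive f z /\ ex_derive (Derive f) z /\ continuous (Derive_n f 2) z) /\
  (exists l, filterlim (Derive f) (at_right 0) (locally l)) /\
  (exists l, filterlim (Derive f) (at_left b) (locally l)) /\
  (exists l, filterlim (Derive_n f 2) (at_right 0) (locally l)) /\
  (exists l, filterlim (Derive_n f 2) (at_left b) (locally l)).

From Stdlib Require Import Reals Lra Lia Classical Ranalysis5 Rtopology IndefiniteDescription.
From Coquelicot Require Import Coquelicot.
Open Scope R_scope.

(* For y in [0,p] the supremum defining phi(y) is attained: the payoff y x - c(x) is upper
   semicontinuous (c is nondecreasing and left-continuous) and, by the growth condition, large x
   do worse than theta_*, so a maximizing sequence has a cluster point in A.  The maximizers stay
   in a bounded set, hence phi is Lipschitz on [0,p], and q = (sigma^2/2) / (phi + gamma) is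
   continuous and bounded below by a positive constant.  Then G(., p) = int_0^. q is a C^1
   bijection with G' = q, its inverse v is C^1 with v' = 1/q(v) = (phi(v) + gamma)/(sigma^2/2),
   and f' = v, f'' = v'.  The equation for gamma is then just the definition of phi(f'(z)),
   and strict convexity of f is strict monotonicity of v. *)

Definition clamp (a b u : R) : R := Rmax a (Rmin b u).

Lemma clamp_in (a b u : R) : a <= b -> a <= clamp a b u <= b.
Proof. intros. unfold clamp, Rmax, Rmin. repeat destruct Rle_dec; lra. Qed.

Lemma clamp_id (a b u : R) : a <= u <= b -> clamp a b u = u.
Proof. intros. unfold clamp, Rmax, Rmin. repeat destruct Rle_dec; lra. Qed.

Lemma clamp_lipschitz (a b u1 u2 : R) :
  Rabs (clamp a b u1 - clamp a b u2) <= Rabs (u1 - u2).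
Proof.
  unfold clamp, Rmax, Rmin.
  repeat destruct Rle_dec; unfold Rabs; repeat destruct Rcase_abs; lra.
Qed.

Lemma lipschitz_continuous (g : R -> R) (K x : R) :
  (forall u1 u2, Rabs (g u1 - g u2) <= K * Rabs (u1 - u2)) -> continuous g x.
Proof.
  intros hg. apply filterlim_locally. intros eps.
  assert (hK : 0 <= K).
  { specialize (hg 1 0). rewrite Rminus_0_r, Rabs_R1 in hg.
    pose proof (Rabs_pos (g 1 - g 0)). lra. }
  assert (hd : 0 < eps / (K + 1)) by (apply Rdiv_lt_0_compat; [apply cond_pos | lra]).
  exists (mkposreal _ hd). intros y hy.
  change (Rabs (g y - g x) < eps). change (Rabs (y - x) < eps / (K + 1)) in hy.
  apply Rle_lt_trans with (K * Rabs (y - x)); [apply hg|].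
  apply Rle_lt_trans with (K * (eps / (K + 1))).
  - apply Rmult_le_compat_l; lra.
  - pose proof (cond_pos eps). apply Rmult_lt_reg_r with (K + 1); [lra|].
    field_simplify; lra.
Qed.

Lemma continuous_clamp_of_lipschitz_on (g : R -> R) (a b K x : R) :
  a <= b -> 0 <= K ->
  (forall u1 u2, a <= u1 <= b -> a <= u2 <= b -> Rabs (g u1 - g u2) <= K * Rabs (u1 - u2)) ->
  continuous (fun u => g (clamp a b u)) x.
Proof.
  intros hab hK hg. apply lipschitz_continuous with K. intros u1 u2.
  eapply Rle_trans; [apply hg; apply clamp_in; exact hab|].
  apply Rmult_le_compat_l; [exact hK | apply clamp_lipschitz].
Qed.

Definition usc_on (A : R -> Prop) (g : R -> R) : Prop :=
  forall x, A x -> forall e, 0 < e ->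
    exists d, 0 < d /\ forall x', A x' -> Rabs (x' - x) < d -> g x' < g x + e.

Lemma cluster_point_in_closed (A : R -> Prop) (a r : R) (u : nat -> R) :
  closed A -> (forall x, A x -> a <= x <= r) -> (forall n, A (u n)) ->
  exists l, A l /\ forall d N, 0 < d -> exists n, (N <= n)%nat /\ Rabs (u n - l) < d.
Proof.
  intros hA hAr hu.
  destruct (Bolzano_Weierstrass u (fun x => a <= x <= r) (compact_P3 a r)
              (fun n => hAr _ (hu n))) as [l hl].
  assert (hclust : forall d N, 0 < d -> exists n, (N <= n)%nat /\ Rabs (u n - l) < d).
  { intros d N hd. apply (hl (fun x => Rabs (x - l) < d)).
    exists (mkposreal d hd). intros x hx. exact hx. }
  exists l. split; [|exact hclust].
  apply hA. intros [d hd]. destruct (hclust d 0%nat (cond_pos d)) as [n [_ hn]].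
  exact (hd (u n) hn (hu n)).
Qed.

Lemma usc_cluster_bound (A : R -> Prop) (g : R -> R) (a r : R) (u : nat -> R) :
  closed A -> (forall x, A x -> a <= x <= r) -> usc_on A g -> (forall n, A (u n)) ->
  exists l, A l /\ forall e N, 0 < e -> exists n, (N <= n)%nat /\ g (u n) < g l + e.
Proof.
  intros hA hAr hg hu.
  destruct (cluster_point_in_closed A a r u hA hAr hu) as [l [hl hclust]].
  exists l. split; [exact hl|]. intros e N he.
  destruct (hg l hl e he) as [d [hd hgd]].
  destruct (hclust d N hd) as [n [hn hun]].
  exists n. split; [exact hn | exact (hgd _ (hu n) hun)].
Qed.

Lemma usc_attains_max (A : R -> Prop) (g : R -> R) (a r x1 : R) :
  closed A -> A x1 -> (forall x, A x -> a <= x <= r) -> usc_on A g ->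
  exists x0, A x0 /\ forall x, A x -> g x <= g x0.
Proof.
  intros hA hx1 hAr hg.
  set (E := fun s => exists x, A x /\ s = g x).
  assert (hE : bound E).
  { apply NNPP. intros hnb.
    assert (hbig : forall n : nat, exists x, A x /\ INR n < g x).
    { intros n. apply NNPP. intros hn. apply hnb. exists (INR n).
      intros s [x [hx ->]]. apply Rnot_lt_le. intros hlt. apply hn. exists x. auto. }
    destruct (functional_choice _ hbig) as [u hu].
    destruct (usc_cluster_bound A g a r u hA hAr hg (fun n => proj1 (hu n))) as [l [_ hl]].
    destruct (INR_unbounded (g l + 1)) as [N hN].
    destruct (hl 1 N Rlt_0_1) as [n [hNn hn]].
    pose proof (le_INR _ _ hNn). pose proof (proj2 (hu n)). lra. }
  destruct (completeness E hE) as [s [hub hlub]]; [exists (g x1), x1; auto|].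
  assert (hnear : forall n : nat, exists x, A x /\ s - / INR (S n) < g x).
  { intros n. apply NNPP. intros hn.
    assert (s <= s - / INR (S n)).
    { apply hlub. intros t [x [hx ->]]. apply Rnot_lt_le. intros hlt. apply hn. exists x. auto. }
    assert (0 < / INR (S n)) by (apply Rinv_0_lt_compat, lt_0_INR; lia). lra. }
  destruct (functional_choice _ hnear) as [u hu].
  destruct (usc_cluster_bound A g a r u hA hAr hg (fun n => proj1 (hu n))) as [l [hl hclust]].
  exists l. split; [exact hl|]. intros x hx.
  enough (s <= g l) by (assert (g x <= s) by (apply hub; exists x; auto); lra).
  apply Rnot_lt_le. intros hlt.
  destruct (archimed_cor1 ((s - g l) / 2)) as [N [hN hN0]]; [lra|].
  destruct (hclust ((s - g l) / 2) N) as [n [hNn hn]]; [lra|].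
  assert (/ INR (S n) <= / INR N).
  { apply Rinv_le_contravar; [apply lt_0_INR; exact hN0 | apply le_INR; lia]. }
  pose proof (proj2 (hu n)). lra.
Qed.

Lemma ex_RInt_of_continuous (g : R -> R) (a b : R) :
  (forall x, continuous g x) -> ex_RInt g a b.
Proof. intros hg. exact (ex_RInt_continuous g a b (fun z _ => hg z)). Qed.

Lemma is_derive_RInt_of_continuous (g : R -> R) (a x : R) :
  (forall t, continuous g t) -> is_derive (fun z => RInt g a z) x (g x).
Proof.
  intros hg. apply is_derive_RInt with a; [|apply hg].
  apply filter_forall. intros z. apply RInt_correct, ex_RInt_of_continuous, hg.
Qed.

Lemma RInt_Chasles_sub (g : R -> R) (a z1 z2 : R) :
  (forall x, continuous g x) -> RInt g a z2 - RInt g a z1 = RInt g z1 z2.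
Proof.
  intros hg. rewrite <- (RInt_Chasles g a z1 z2) by apply ex_RInt_of_continuous, hg.
  unfold plus; simpl. ring.
Qed.

Lemma RInt_const_R (k a b : R) : RInt (fun _ => k) a b = k * (b - a).
Proof. rewrite RInt_const. unfold scal; simpl. unfold mult; simpl. ring. Qed.

Lemma RInt_strictly_convex (g : R -> R) (a z1 z2 t : R) :
  (forall x, continuous g x) -> (forall x y, z1 <= x -> x < y -> y <= z2 -> g x < g y) ->
  z1 < z2 -> 0 < t < 1 ->
  RInt g a (t * z1 + (1 - t) * z2) < t * RInt g a z1 + (1 - t) * RInt g a z2.
Proof.
  intros hg hinc hz ht. set (m := t * z1 + (1 - t) * z2).
  assert (hm : z1 < m < z2) by (unfold m; split; nra).
  assert (hleft : RInt g z1 m < g m * (m - z1)).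
  { rewrite <- RInt_const_R. apply RInt_lt; [lra | intros; apply continuous_const | auto |].
    intros x hx. apply hinc; lra. }
  assert (hright : g m * (z2 - m) < RInt g m z2).
  { rewrite <- RInt_const_R. apply RInt_lt; [lra | auto | intros; apply continuous_const |].
    intros x hx. apply hinc; lra. }
  assert (hw : t * (g m * (m - z1)) = (1 - t) * (g m * (z2 - m))) by (unfold m; ring).
  rewrite <- (RInt_Chasles_sub g a z1 m hg) in hleft.
  rewrite <- (RInt_Chasles_sub g a m z2 hg) in hright.
  apply (Rmult_lt_compat_l t) in hleft; [|lra].
  apply (Rmult_lt_compat_l (1 - t)) in hright; [|lra].
  lra.
Qed.

Lemma RInt_nondecreasing (g : R -> R) (a z1 z2 : R) :
  (forall x, continuous g x) -> (forall x, z1 <= x <= z2 -> 0 <= g x) -> z1 <= z2 ->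
  RInt g a z1 <= RInt g a z2.
Proof.
  intros hg hpos hz.
  assert (hI : 0 <= RInt g z1 z2).
  { apply RInt_ge_0; [exact hz | apply ex_RInt_of_continuous, hg |].
    intros x hx. apply hpos. lra. }
  rewrite <- (RInt_Chasles_sub g a z1 z2 hg) in hI. lra.
Qed.

Lemma is_derive_inverse (G G' u : R -> R) (lb ub z : R) :
  (forall w, is_derive G w (G' w)) -> continuous u z -> lb < z < ub ->
  (forall y, lb <= y <= ub -> G (u y) = y) -> u lb <= u z <= u ub -> G' (u z) <> 0 ->
  is_derive u z (/ G' (u z)).
Proof.
  intros hG hu hz hGu huz hG'.
  assert (Prf : forall a, u lb <= a <= u ub -> derivable_pt G a).
  { intros a _. exists (G' a). apply is_derive_Reals, hG. }
  assert (hder : derive_pt G (u z) (Prf (u z) huz) = G' (u z)).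
  { apply derive_pt_eq_0, is_derive_Reals, hG. }
  assert (hinv := derivable_pt_lim_recip_interv G u lb ub z Prf
                    (proj2 (continuity_pt_filterlim u z) hu) ltac:(lra) hz huz hGu
                    ltac:(rewrite hder; exact hG')).
  rewrite hder in hinv. apply is_derive_Reals.
  unfold Rdiv in hinv. rewrite Rmult_1_l in hinv. exact hinv.
Qed.

Lemma locally_open_interval (a b z : R) : a < z < b -> locally z (fun t => a < t < b).
Proof. apply (open_and _ _ (open_gt a) (open_lt b)). Qed.

Lemma filterlim_at_right_of_eq (g h : R -> R) (a b : R) :
  a < b -> (forall y, a < y < b -> g y = h y) -> continuous h a ->
  filterlim g (at_right a) (locally (h a)).
Proof.
  intros hab hgh hh. apply filterlim_ext_loc with h.
  - exists (mkposreal _ (proj2 (Rlt_0_minus _ _) hab)). intros y hy hya.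
    change (Rabs (y - a) < b - a) in hy. apply Rabs_def2 in hy.
    symmetry. apply hgh. lra.
  - exact (filterlim_filter_le_1 _ (filter_le_within _) hh).
Qed.

Lemma filterlim_at_left_of_eq (g h : R -> R) (a b : R) :
  a < b -> (forall y, a < y < b -> g y = h y) -> continuous h b ->
  filterlim g (at_left b) (locally (h b)).
Proof.
  intros hab hgh hh. apply filterlim_ext_loc with h.
  - exists (mkposreal _ (proj2 (Rlt_0_minus _ _) hab)). intros y hy hyb.
    change (Rabs (y - b) < b - a) in hy. apply Rabs_def2 in hy.
    symmetry. apply hgh. lra.
  - exact (filterlim_filter_le_1 _ (filter_le_within _) hh).
Qed.

Lemma Glb_Rbar_le_member (E : R -> Prop) (m r : R) :
  (forall s, E s -> m <= s) -> E r -> real (Glb_Rbar E) <= r.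
Proof.
  intros hm hr. destruct (Glb_Rbar_correct E) as [hlb hglb].
  assert (h1 : Rbar_le m (Glb_Rbar E)) by (apply hglb; intros s hs; apply hm, hs).
  assert (h2 : Rbar_le (Glb_Rbar E) r) by (apply hlb, hr).
  destruct (Glb_Rbar E); simpl in *; tauto.
Qed.

Lemma phi_eq_max (A : R -> Prop) (c : R -> R) (y x0 : R) :
  A x0 -> (forall x, A x -> y * x - c x <= y * x0 - c x0) -> phi A c y = y * x0 - c x0.
Proof.
  intros hx0 hmax. unfold phi.
  rewrite (is_lub_Rbar_unique _ (Finite (y * x0 - c x0))); [reflexivity|].
  split.
  - intros r [x [hx ->]]. apply hmax, hx.
  - intros l hl. apply hl. exists x0. auto.
Qed.

Record admissible_cost (A : R -> Prop) (c : R -> R) (theta : R) : Prop := {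
  cost_closed : closed A;
  cost_theta_mem : A theta;
  cost_theta_min : forall x, A x -> theta <= x;
  cost_mono : forall x y, A x -> A y -> x <= y -> c x <= c y;
  cost_left_cont : forall x, A x ->
    filterlim c (within (fun y => A y /\ y <= x) (locally x)) (locally (c x));
  cost_theta_zero : c theta = 0;
  cost_growth : ~ (exists M, forall x, A x -> x <= M) ->
    forall M, exists Y, forall y, Y <= y ->
      Rbar_le (Finite M) (Glb_Rbar (fun r => exists x, A x /\ y <= x /\ r = c x / x)) }.
Arguments cost_closed {A c theta}.
Arguments cost_theta_mem {A c theta}.
Arguments cost_theta_min {A c theta}.
Arguments cost_mono {A c theta}.
Arguments cost_left_cont {A c theta}.
Arguments cost_theta_zero {A c theta}.
Arguments cost_growth {A c theta}.

(* The integrand of G(., p), with u clamped to [0,p] so that it is continuous on all of R;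
   G(., p) is its primitive from 0 on [0,p]. *)
Definition rate (A : R -> Prop) (c : R -> R) (sigma p gamma u : R) : R :=
  1 / 2 * sigma ^ 2 / (phi A c (clamp 0 p u) + gamma).

Section Conjugate.

Variables (A : R -> Prop) (c : R -> R) (theta : R).
Hypothesis hcost : admissible_cost A c theta.

Lemma c_nonneg (x : R) : A x -> 0 <= c x.
Proof.
  intros hx. rewrite <- (cost_theta_zero hcost).
  exact (cost_mono hcost theta x (cost_theta_mem hcost) hx (cost_theta_min hcost x hx)).
Qed.

Lemma c_lower_semicontinuous (x e : R) : A x -> 0 < e ->
  exists d, 0 < d /\ forall x', A x' -> Rabs (x' - x) < d -> c x - e < c x'.
Proof.
  intros hx he.
  destruct (proj1 (filterlim_locally _ _) (cost_left_cont hcost x hx) (mkposreal e he))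
    as [d hd].
  exists d. split; [apply cond_pos|]. intros x' hx' hd'.
  destruct (Rle_or_lt x' x) as [hle | hlt].
  - specialize (hd x' hd' (conj hx' hle)).
    change (Rabs (c x' - c x) < e) in hd. apply Rabs_def2 in hd. lra.
  - pose proof (cost_mono hcost x x' hx hx' (Rlt_le _ _ hlt)). lra.
Qed.

Lemma payoff_usc (y xmax : R) : 0 <= y ->
  usc_on (fun x => A x /\ x <= xmax) (fun x => y * x - c x).
Proof.
  intros hy x [hx _] e he.
  destruct (c_lower_semicontinuous x (e / 2) hx ltac:(lra)) as [d1 [hd1 hc]].
  set (d := Rmin d1 (e / (2 * (y + 1)))).
  assert (hd : 0 < d) by (apply Rmin_glb_lt; [lra | apply Rdiv_lt_0_compat; lra]).
  assert (hyd : y * d <= e / 2).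
  { apply Rle_trans with ((y + 1) * (e / (2 * (y + 1)))); [|right; field; lra].
    assert (hde : d <= e / (2 * (y + 1))) by apply Rmin_r. nra. }
  exists d. split; [exact hd|]. intros x' [hx' _] hxx'.
  specialize (hc x' hx' (Rlt_le_trans _ _ _ hxx' (Rmin_l _ _))).
  apply Rabs_def2 in hxx'.
  assert (y * (x' - x) <= y * d) by (apply Rmult_le_compat_l; lra).
  lra.
Qed.

Lemma large_points_suboptimal (P : R) : 0 <= P ->
  exists xmax, theta <= xmax /\
    forall y x, 0 <= y <= P -> A x -> xmax < x -> y * x - c x < y * theta.
Proof.
  intros hP.
  destruct (classic (exists M, forall x, A x -> x <= M)) as [[M hM] | hunb].
  - exists (Rmax theta M). split; [apply Rmax_l|]. intros y x _ hx hx_large.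
    pose proof (hM x hx). pose proof (Rmax_r theta M). lra.
  - destruct (cost_growth hcost hunb (P + 1)) as [Y hY].
    set (xmax := Rmax (Rmax Y 0) (Rmax theta (P * Rabs theta))).
    assert (hxmax : Y <= xmax /\ 0 <= xmax /\ theta <= xmax /\ P * Rabs theta <= xmax).
    { unfold xmax. repeat split;
        [ eapply Rle_trans; [apply Rmax_l | apply Rmax_l]
        | eapply Rle_trans; [apply Rmax_r | apply Rmax_l]
        | eapply Rle_trans; [apply Rmax_l | apply Rmax_r]
        | eapply Rle_trans; [apply Rmax_r | apply Rmax_r] ]. }
    exists xmax. split; [tauto|]. intros y x hy hx hx_large.
    assert (hratio : P + 1 <= c x / x).
    { change (Rbar_le (P + 1) (c x / x)).
      apply (Rbar_le_trans _ _ _ (hY xmax (proj1 hxmax))).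
      apply (proj1 (Glb_Rbar_correct _)). exists x. repeat split; auto; lra. }
    assert (hcx : (P + 1) * x <= c x).
    { replace (c x) with (c x / x * x) by (field; lra). apply Rmult_le_compat_r; lra. }
    assert (y * x <= P * x) by (apply Rmult_le_compat_r; lra).
    assert (- (P * Rabs theta) <= y * theta).
    { assert (y * Rabs theta <= P * Rabs theta)
        by (apply Rmult_le_compat_r; [apply Rabs_pos | lra]).
      unfold Rabs in *; destruct Rcase_abs; nra. }
    lra.
Qed.

Lemma phi_maximizers_bounded (P : R) : 0 <= P ->
  exists xmax, theta <= xmax /\ forall y, 0 <= y <= P ->
    exists x0, A x0 /\ theta <= x0 <= xmax /\ phi A c y = y * x0 - c x0 /\
      forall x, A x -> y * x - c x <= phi A c y.
Proof.
  intros hP. destruct (large_points_suboptimal P hP) as [xmax [hxmax hlarge]].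
  exists xmax. split; [exact hxmax|]. intros y hy.
  destruct (usc_attains_max (fun x => A x /\ x <= xmax) (fun x => y * x - c x) theta xmax theta)
    as [x0 [[hx0 hx0_le] hmax]].
  - exact (closed_and _ _ (cost_closed hcost) (closed_le xmax)).
  - split; [apply (cost_theta_mem hcost) | exact hxmax].
  - intros x [hx hx_le]. split; [exact (cost_theta_min hcost x hx) | exact hx_le].
  - apply payoff_usc, hy.
  - assert (hmaxA : forall x, A x -> y * x - c x <= y * x0 - c x0).
    { intros x hx. destruct (Rle_or_lt x xmax) as [hx_le | hx_gt].
      - apply hmax. split; assumption.
      - pose proof (hlarge y x hy hx hx_gt).
        pose proof (hmax theta (conj (cost_theta_mem hcost) hxmax)).
        rewrite (cost_theta_zero hcost) in *. lra. }
    rewrite (phi_eq_max A c y x0 hx0 hmaxA).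
    exists x0. repeat split; auto. exact (cost_theta_min hcost x0 hx0).
Qed.

Lemma phi_at_0 : phi A c 0 = 0.
Proof.
  rewrite (phi_eq_max A c 0 theta (cost_theta_mem hcost)), (cost_theta_zero hcost); [ring|].
  intros x hx. pose proof (c_nonneg x hx). rewrite (cost_theta_zero hcost). lra.
Qed.

Lemma phi_lipschitz_on (P : R) : 0 <= P ->
  exists K, 0 <= K /\ forall y1 y2, 0 <= y1 <= P -> 0 <= y2 <= P ->
    Rabs (phi A c y1 - phi A c y2) <= K * Rabs (y1 - y2).
Proof.
  intros hP. destruct (phi_maximizers_bounded P hP) as [xmax [hxmax hmaxz]].
  set (K := Rabs theta + Rabs xmax).
  exists K. split; [unfold K; pose proof (Rabs_pos theta); pose proof (Rabs_pos xmax); lra|].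
  intros y1 y2 hy1 hy2.
  destruct (hmaxz y1 hy1) as [x1 [hx1 [hx1_rng [he1 hm1]]]].
  destruct (hmaxz y2 hy2) as [x2 [hx2 [hx2_rng [he2 hm2]]]].
  (* Comparing each maximizer with the other one:
     (y1 - y2) x2 <= phi y1 - phi y2 <= (y1 - y2) x1. *)
  specialize (hm1 x2 hx2). specialize (hm2 x1 hx1).
  assert (hbound : forall x, theta <= x <= xmax -> Rabs ((y1 - y2) * x) <= K * Rabs (y1 - y2)).
  { intros x hx. rewrite Rabs_mult, Rmult_comm. apply Rmult_le_compat_r; [apply Rabs_pos|].
    unfold K, Rabs; repeat destruct Rcase_abs; lra. }
  pose proof (hbound x1 hx1_rng). pose proof (hbound x2 hx2_rng).
  pose proof (Rle_abs ((y1 - y2) * x1)). pose proof (Rle_abs ((y1 - y2) * x2)).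
  pose proof (Rabs_maj2 ((y1 - y2) * x1)). pose proof (Rabs_maj2 ((y1 - y2) * x2)).
  apply Rabs_le. split; nra.
Qed.

Lemma phi_ge_neg_phi_star (p y : R) : 0 <= p -> 0 <= y <= p -> - phi_star A c p <= phi A c y.
Proof.
  intros hp hy. destruct (phi_lipschitz_on p hp) as [K [hK hlip]].
  unfold phi_star. rewrite Ropp_involutive.
  apply Glb_Rbar_le_member with (- (K * p)); [|exists y; auto].
  intros s [y' [hy' ->]].
  specialize (hlip y' 0 hy' ltac:(lra)). rewrite phi_at_0, !Rminus_0_r in hlip.
  rewrite (Rabs_right y') in hlip by lra.
  pose proof (Rabs_maj2 (phi A c y')). nra.
Qed.

Section Rate.

Variables (sigma p gamma : R).
Hypotheses (hsigma : 0 < sigma) (hp : 0 < p) (hgamma : phi_star A c p < gamma).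

Lemma phi_clamp_continuous (x : R) : continuous (fun u => phi A c (clamp 0 p u)) x.
Proof.
  destruct (phi_lipschitz_on p (Rlt_le _ _ hp)) as [K [hK hlip]].
  apply continuous_clamp_of_lipschitz_on with K; [lra | exact hK | exact hlip].
Qed.

Lemma phi_clamp_bounds : exists M, forall u,
  - phi_star A c p <= phi A c (clamp 0 p u) <= M.
Proof.
  destruct (phi_lipschitz_on p (Rlt_le _ _ hp)) as [K [hK hlip]].
  exists (K * p). intros u. pose proof (clamp_in 0 p u (Rlt_le _ _ hp)) as hu.
  split; [apply phi_ge_neg_phi_star; lra|].
  specialize (hlip (clamp 0 p u) 0 hu ltac:(lra)).
  rewrite phi_at_0, !Rminus_0_r, (Rabs_right (clamp 0 p u)) in hlip by lra.
  pose proof (Rle_abs (phi A c (clamp 0 p u))).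
  assert (K * clamp 0 p u <= K * p) by (apply Rmult_le_compat_l; lra). lra.
Qed.

Lemma inv_phi_clamp_continuous (u : R) :
  continuous (fun u => / (phi A c (clamp 0 p u) + gamma)) u.
Proof.
  destruct phi_clamp_bounds as [M hM].
  apply continuous_Rinv_comp; [|pose proof (hM u); lra].
  apply (continuous_plus (fun u => phi A c (clamp 0 p u)) (fun _ => gamma));
    [apply phi_clamp_continuous | apply continuous_const].
Qed.

Lemma rate_continuous (u : R) : continuous (rate A c sigma p gamma) u.
Proof.
  apply (continuous_mult (fun _ => 1 / 2 * sigma ^ 2));
    [apply continuous_const | apply inv_phi_clamp_continuous].
Qed.

Lemma rate_bounded_below : exists m, 0 < m /\ forall u, m <= rate A c sigma p gamma u.
Proof.
  destruct phi_clamp_bounds as [M hM].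
  pose proof (hM 0). pose proof (pow_lt sigma 2 hsigma).
  exists (1 / 2 * sigma ^ 2 / (M + gamma)). split; [apply Rdiv_lt_0_compat; lra|].
  intros u. unfold rate, Rdiv. apply Rmult_le_compat_l; [lra|].
  pose proof (hM u). apply Rinv_le_contravar; lra.
Qed.

Lemma Gfun_eq_RInt_rate (w : R) : 0 <= w <= p ->
  Gfun A c sigma gamma w = RInt (rate A c sigma p gamma) 0 w.
Proof.
  intros hw. unfold Gfun.
  transitivity (1 / 2 * sigma ^ 2 * RInt (fun u => / (phi A c (clamp 0 p u) + gamma)) 0 w).
  - f_equal. apply RInt_ext. intros x hx.
    rewrite Rmin_left in hx by lra. rewrite Rmax_right in hx by lra.
    rewrite clamp_id by lra. reflexivity.
  - symmetry. exact (RInt_scal _ _ _ _ (ex_RInt_of_continuous _ _ _ inv_phi_clamp_continuous)).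
Qed.

Lemma rate_hamiltonian_min (w : R) : 0 <= w <= p ->
  (exists x, A x /\ 1 / 2 * sigma ^ 2 * / rate A c sigma p gamma w - x * w + c x = gamma) /\
  (forall x, A x -> gamma <= 1 / 2 * sigma ^ 2 * / rate A c sigma p gamma w - x * w + c x).
Proof.
  intros hw. destruct phi_clamp_bounds as [M hM].
  destruct (phi_maximizers_bounded p (Rlt_le _ _ hp)) as [xmax [_ hmaxz]].
  destruct (hmaxz w hw) as [x0 [hx0 [_ [hphi hle]]]].
  assert (hrate : 1 / 2 * sigma ^ 2 * / rate A c sigma p gamma w = phi A c w + gamma).
  { pose proof (hM w). pose proof (pow_lt sigma 2 hsigma).
    unfold rate. rewrite clamp_id in * by exact hw. field. lra. }
  rewrite hrate. split.
  - exists x0. split; [exact hx0 | lra].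
  - intros x hx. specialize (hle x hx). lra.
Qed.

End Rate.

End Conjugate.

Section InversePrimitive.

Variables (q v : R -> R) (m b p : R).
Hypotheses (hq : forall w, continuous q w) (hm : 0 < m) (hqm : forall w, m <= q w) (hb : 0 < b)
  (hv : forall y, 0 <= y <= b -> 0 <= v y <= p /\ RInt q 0 (v y) = y)
  (hqp : RInt q 0 p = b).

Lemma primitive_increment (w1 w2 : R) : w1 <= w2 ->
  m * (w2 - w1) <= RInt q 0 w2 - RInt q 0 w1.
Proof.
  intros hw. rewrite (RInt_Chasles_sub q 0 w1 w2 hq), <- RInt_const_R.
  apply RInt_le; [exact hw | apply ex_RInt_const | apply ex_RInt_of_continuous, hq |].
  intros. apply hqm.
Qed.

Lemma primitive_expanding (w1 w2 : R) :
  m * Rabs (w1 - w2) <= Rabs (RInt q 0 w1 - RInt q 0 w2).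
Proof.
  destruct (Rle_or_lt w1 w2) as [h | h];
    [ pose proof (primitive_increment _ _ h)
    | pose proof (primitive_increment _ _ (Rlt_le _ _ h)) ];
    unfold Rabs; repeat destruct Rcase_abs; nra.
Qed.

Lemma inverse_lipschitz (y1 y2 : R) : 0 <= y1 <= b -> 0 <= y2 <= b ->
  m * Rabs (v y1 - v y2) <= Rabs (y1 - y2).
Proof.
  intros hy1 hy2. rewrite <- (proj2 (hv y1 hy1)), <- (proj2 (hv y2 hy2)) at 2.
  apply primitive_expanding.
Qed.

Lemma inverse_strictly_increasing (y1 y2 : R) : 0 <= y1 -> y1 < y2 -> y2 <= b -> v y1 < v y2.
Proof.
  intros h1 h12 h2. apply Rnot_le_lt. intros hle.
  pose proof (primitive_increment _ _ hle) as hinc.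
  rewrite (proj2 (hv y1 ltac:(lra))), (proj2 (hv y2 ltac:(lra))) in hinc.
  nra.
Qed.

Lemma inverse_eq (y w : R) : 0 <= y <= b -> RInt q 0 w = y -> v y = w.
Proof.
  intros hy hw. pose proof (primitive_expanding (v y) w) as hexp.
  rewrite (proj2 (hv y hy)), hw, Rminus_diag, Rabs_R0 in hexp.
  pose proof (Rabs_pos (v y - w)).
  assert (habs : Rabs (v y - w) = 0) by nra.
  apply Rabs_eq_0 in habs. lra.
Qed.

Lemma inverse_at_0 : v 0 = 0.
Proof. apply inverse_eq; [lra | rewrite RInt_point; reflexivity]. Qed.

Lemma inverse_at_b : v b = p.
Proof. apply inverse_eq; [lra | exact hqp]. Qed.

(* v only matters on [0,b]; extending it by constants makes it continuous on all of R. *)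
Let vc := fun y => v (clamp 0 b y).

Lemma vc_eq (y : R) : 0 <= y <= b -> vc y = v y.
Proof. intros hy. unfold vc. rewrite clamp_id; auto. Qed.

Lemma vc_continuous (x : R) : continuous vc x.
Proof.
  apply continuous_clamp_of_lipschitz_on with (/ m);
    [lra | left; apply Rinv_0_lt_compat, hm |].
  intros y1 y2 hy1 hy2. apply Rmult_le_reg_l with m; [exact hm|].
  rewrite <- Rmult_assoc, Rinv_r, Rmult_1_l by lra. apply inverse_lipschitz; assumption.
Qed.

Lemma is_derive_vc (z : R) : 0 < z < b -> is_derive vc z (/ q (v z)).
Proof.
  intros hz. rewrite <- vc_eq by lra.
  apply is_derive_inverse with (fun w => RInt q 0 w) 0 b.
  - intros w. apply is_derive_RInt_of_continuous, hq.
  - apply vc_continuous.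
  - exact hz.
  - intros y hy. rewrite vc_eq by exact hy. apply hv, hy.
  - rewrite !vc_eq by lra. split; left; apply inverse_strictly_increasing; lra.
  - pose proof (hqm (vc z)). lra.
Qed.

Lemma is_derive_primitive (z : R) : 0 < z < b -> is_derive (fun z => RInt v 0 z) z (v z).
Proof.
  intros hz. rewrite <- vc_eq by lra.
  apply is_derive_ext_loc with (fun z => RInt vc 0 z).
  - apply filter_imp with (fun t => 0 < t < b); [|apply locally_open_interval, hz].
    intros t ht. apply RInt_ext. intros x hx.
    rewrite Rmin_left in hx by lra. rewrite Rmax_right in hx by lra. apply vc_eq. lra.
  - apply is_derive_RInt_of_continuous, vc_continuous.
Qed.

Lemma is_derive_Derive_primitive (z : R) : 0 < z < b ->
  is_derive (Derive (fun z => RInt v 0 z)) z (/ q (v z)).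
Proof.
  intros hz. apply is_derive_ext_loc with vc; [|apply is_derive_vc, hz].
  apply filter_imp with (fun t => 0 < t < b); [|apply locally_open_interval, hz].
  intros t ht. rewrite vc_eq by lra. symmetry. apply is_derive_unique, is_derive_primitive, ht.
Qed.

Lemma primitive_eq_vc (z : R) : 0 <= z <= b -> RInt v 0 z = RInt vc 0 z.
Proof.
  intros hz. apply RInt_ext. intros x hx.
  rewrite Rmin_left in hx by lra. rewrite Rmax_right in hx by lra.
  symmetry. apply vc_eq. lra.
Qed.

Lemma vc_nonneg (x : R) : 0 <= vc x.
Proof. apply hv, clamp_in. lra. Qed.

Lemma primitive_nondecreasing (z1 z2 : R) : 0 <= z1 -> z1 <= z2 -> z2 <= b ->
  RInt v 0 z1 <= RInt v 0 z2.
Proof.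
  intros h1 h12 h2. rewrite !primitive_eq_vc by lra.
  apply RInt_nondecreasing; [apply vc_continuous | intros; apply vc_nonneg | exact h12].
Qed.

Lemma primitive_strictly_convex (z1 z2 t : R) : 0 <= z1 -> z1 < z2 -> z2 <= b -> 0 < t < 1 ->
  RInt v 0 (t * z1 + (1 - t) * z2) < t * RInt v 0 z1 + (1 - t) * RInt v 0 z2.
Proof.
  intros h1 h12 h2 ht. rewrite !primitive_eq_vc by nra.
  apply RInt_strictly_convex; [apply vc_continuous | | exact h12 | exact ht].
  intros x y hx hxy hy. rewrite !vc_eq by lra. apply inverse_strictly_increasing; lra.
Qed.

Lemma primitive_nonneg (z : R) : 0 <= z <= b -> 0 <= RInt v 0 z.
Proof.
  intros hz. replace 0 with (RInt v 0 0) at 1 by (rewrite RInt_point; reflexivity).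
  apply primitive_nondecreasing; lra.
Qed.

Lemma Derive_primitive_eq (y : R) : 0 < y < b -> Derive (fun z => RInt v 0 z) y = v y.
Proof. intros hy. apply is_derive_unique, is_derive_primitive, hy. Qed.

Lemma Derive2_primitive_eq (y : R) : 0 < y < b ->
  Derive_n (fun z => RInt v 0 z) 2 y = / q (v y).
Proof. intros hy. apply is_derive_unique, is_derive_Derive_primitive, hy. Qed.

Lemma Derive_primitive_eq_vc (y : R) : 0 < y < b -> Derive (fun z => RInt v 0 z) y = vc y.
Proof. intros hy. rewrite vc_eq by lra. apply Derive_primitive_eq, hy. Qed.

Lemma Derive2_primitive_eq_vc (y : R) : 0 < y < b ->
  Derive_n (fun z => RInt v 0 z) 2 y = / q (vc y).
Proof. intros hy. rewrite vc_eq by lra. apply Derive2_primitive_eq, hy. Qed.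

Lemma inv_q_vc_continuous (x : R) : continuous (fun y => / q (vc y)) x.
Proof.
  apply continuous_Rinv_comp; [apply continuous_comp; [apply vc_continuous | apply hq]|].
  pose proof (hqm (vc x)). lra.
Qed.

Lemma primitive_C2_closed : C2_closed (fun z => RInt v 0 z) b.
Proof.
  split; [intros z hz; split; [|split] | split; [|split; [|split]]].
  - exists (v z). apply is_derive_primitive, hz.
  - exists (/ q (v z)). apply is_derive_Derive_primitive, hz.
  - apply continuous_ext_loc with (fun y => / q (vc y)); [|apply inv_q_vc_continuous].
    apply filter_imp with (fun t => 0 < t < b); [|apply locally_open_interval, hz].
    intros t ht. symmetry. apply Derive2_primitive_eq_vc, ht.
  - exists (vc 0). apply filterlim_at_right_of_eq with (b := b);
      auto using vc_continuous, Derive_primitive_eq_vc.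
  - exists (vc b). apply filterlim_at_left_of_eq with (a := 0);
      auto using vc_continuous, Derive_primitive_eq_vc.
  - exists (/ q (vc 0)).
    apply filterlim_at_right_of_eq with (h := fun y => / q (vc y)) (b := b);
      auto using inv_q_vc_continuous, Derive2_primitive_eq_vc.
  - exists (/ q (vc b)).
    apply filterlim_at_left_of_eq with (h := fun y => / q (vc y)) (a := 0);
      auto using inv_q_vc_continuous, Derive2_primitive_eq_vc.
Qed.

Lemma Derive_primitive_at_0 : filterlim (Derive (fun z => RInt v 0 z)) (at_right 0) (locally 0).
Proof.
  pose proof (filterlim_at_right_of_eq _ vc 0 b hb Derive_primitive_eq_vc (vc_continuous 0))
    as hlim.
  rewrite vc_eq, inverse_at_0 in hlim by lra. exact hlim.
Qed.

Lemma Derive_primitive_at_b : filterlim (Derive (fun z => RInt v 0 z)) (at_left b) (locally p).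
Proof.
  pose proof (filterlim_at_left_of_eq _ vc 0 b hb Derive_primitive_eq_vc (vc_continuous b))
    as hlim.
  rewrite vc_eq, inverse_at_b in hlim by lra. exact hlim.
Qed.

End InversePrimitive.

Theorem proposition7
  (b sigma p : R) (A : R -> Prop) (c : R -> R) (theta : R)
  (gamma : R) (v : R -> R)
  (hb : 0 < b) (hsigma : 0 < sigma) (hp : 0 < p)
  (hAclosed : closed A)
  (htheta : A theta /\ (forall x, A x -> theta <= x))
  (hcmono : forall x y, A x -> A y -> x <= y -> c x <= c y)
  (hcleft : forall x, A x ->
     filterlim c (within (fun y => A y /\ y <= x) (locally x)) (locally (c x)))
  (hctheta : c theta = 0)
  (hcpos : forall x, A x -> theta < x -> 0 < c x)
  (hgrowth : ~ (exists M, forall x, A x -> x <= M) ->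
     forall M, exists Y, forall y, Y <= y ->
       Rbar_le (Finite M) (Glb_Rbar (fun r => exists x, A x /\ y <= x /\ r = c x / x)))
  (hgamma : phi_star A c p < gamma /\ Gfun A c sigma gamma p = b)
  (hv : forall y, 0 <= y <= b -> 0 <= v y <= p /\ Gfun A c sigma gamma (v y) = y) :
  let f := fun z => RInt v 0 z in
  (forall z, 0 <= z <= b -> 0 <= f z) /\
  (forall z1 z2, 0 <= z1 -> z1 <= z2 -> z2 <= b -> f z1 <= f z2) /\
  (forall z1 z2 t, 0 <= z1 -> z1 < z2 -> z2 <= b -> 0 < t < 1 ->
     f (t * z1 + (1 - t) * z2) < t * f z1 + (1 - t) * f z2) /\
  C2_closed f b /\
  (forall z, 0 < z < b ->
     (exists x, A x /\
        (1/2) * sigma ^ 2 * Derive_n f 2 z - x * Derive f z + c x = gamma) /\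
     (forall x, A x ->
        gamma <= (1/2) * sigma ^ 2 * Derive_n f 2 z - x * Derive f z + c x)) /\
  filterlim (Derive f) (at_right 0) (locally 0) /\
  filterlim (Derive f) (at_left b) (locally p).
Proof.
  intros f.
  destruct htheta as [hAtheta htheta_min]. destruct hgamma as [hgamma hGp].
  assert (hcost : admissible_cost A c theta) by (constructor; assumption).
  set (q := rate A c sigma p gamma).
  assert (hq : forall u, continuous q u)
    by (intros u; apply rate_continuous with theta; assumption).
  destruct (rate_bounded_below A c theta hcost sigma p gamma hsigma hp hgamma) as [m [hm hqm]].
  assert (hv' : forall y, 0 <= y <= b -> 0 <= v y <= p /\ RInt q 0 (v y) = y).
  { intros y hy. destruct (hv y hy) as [hvy hGv]. split; [exact hvy|].
    rewrite <- hGv at 2. symmetry. apply Gfun_eq_RInt_rate with theta; assumption. }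
  assert (hqp : RInt q 0 p = b).
  { rewrite <- hGp. symmetry. apply Gfun_eq_RInt_rate with theta; try assumption. lra. }
  split; [|split; [|split; [|split; [|split; [|split]]]]].
  - intros z hz. apply (primitive_nonneg q v m b p); assumption.
  - intros z1 z2 h1 h12 h2. apply (primitive_nondecreasing q v m b p); assumption.
  - intros z1 z2 t h1 h12 h2 ht. apply (primitive_strictly_convex q v m b p); assumption.
  - apply (primitive_C2_closed q v m b p); assumption.
  - intros z hz. unfold f.
    rewrite (Derive2_primitive_eq q v m b p), (Derive_primitive_eq q v m b p) by assumption.
    apply rate_hamiltonian_min with theta; try assumption. apply hv'. lra.
  - apply (Derive_primitive_at_0 q v m b p); assumption.
  - apply (Derive_primitive_at_b q v m b p); assumption.
Qed.
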